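(* Let $k\ge 4$ be an integer and let $T=[a,a+h]\times[b,b+h]\subset\mathbb R^2$ be a square of side $h>0$ with lower-left vertex $\mathbf x_1=(a,b)$. Let $$V_T=\{v\in Q_k(T):\ \partial_{\mathbf n}v|_e\in Q_{k-1}(e)\ \text{for each of the four edges } e \text{ of } T\}.$$ Consider the following linear functionals on $V_T$: (i) $v\mapsto v(\mathbf x_1+\tfrac{h}{k-2}(i,j))$ for $i,j=0,\dots,k-2$; (ii) $v\mapsto \partial_x v(\mathbf x_1+h(i,\tfrac{j}{k-3}))$ for $i=0,1$, $j=0,\dots,k-3$; (iii) $v\mapsto \partial_y v(\mathbf x_1+h(\tfrac{i}{k-3},j))$ for $i=0,\dots,k-3$, $j=0,1$; (iv) $v\mapsto \partial_{xy} v(\mathbf x_1+h(i,j))$ for $i,j=0,1$. Then this set of degrees of freedom uniquely determines a function of $V_T$: for any prescribed values of these functionals there exists exactly one $v\in V_T$ attaining them.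
   Context: $Q_k$ denotes the space of polynomials of degree at most $k$ in each variable separately, i.e. $Q_k=\mathrm{span}\{x_1^{k_1}\cdots x_d^{k_d}:0\le k_i\le k\}$ in dimension $d$; on an edge $e$ (a segment) $Q_{k-1}(e)$ means polynomials of degree at most $k-1$ in the variable along the edge. $\partial_{\mathbf n}$ denotes the derivative in the direction normal to the edge $e$ (i.e. $\partial_y$ on horizontal edges, $\partial_x$ on vertical edges), and the condition means that its restriction to $e$ is a polynomial of degree at most $k-1$ along $e$. *)

From mathcomp Require Import all_boot all_order all_algebra.
From mathcomp Require Export reals.
Set Implicit Arguments. Unset Strict Implicit. Unset Printing Implicit Defensive.
Import Order.TTheory GRing.Theory Num.Theory.
Local Open Scope ring_scope.

(* Bivariate polynomials in (x, y): an element p : {poly {poly R}} is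
   p = \sum_j p`_j(x) y^j, i.e. the outer variable is y and the
   coefficients are polynomials in x. *)
Notation poly2 R := {poly {poly R}}.

Definition eval2 (R : comNzRingType) (p : poly2 R) (x y : R) : R :=
  (p.[y%:P]).[x].

Definition dx (R : nzRingType) (p : poly2 R) : poly2 R :=
  map_poly (fun q : {poly R} => q^`()) p.
Definition dy (R : nzRingType) (p : poly2 R) : poly2 R := p^`().

Definition inQ (R : nzRingType) (k : nat) (p : poly2 R) : Prop :=
  (size p <= k.+1)%N /\ forall j, (size (nth 0%R p j) <= k.+1)%N.

Definition restr_h (R : comNzRingType) (p : poly2 R) (c : R) : {poly R} :=
  p.[c%:P].
Definition restr_v (R : comNzRingType) (p : poly2 R) (c : R) : {poly R} :=
  map_poly (fun q : {poly R} => q.[c]) p.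

Definition inVT (R : comNzRingType) (k : nat) (a b h : R) (p : poly2 R) : Prop :=
  [/\ inQ k p,
      (size (restr_h (dy p) b) <= k)%N,
      (size (restr_h (dy p) (b + h)) <= k)%N,
      (size (restr_v (dx p) a) <= k)%N &
      (size (restr_v (dx p) (a + h)) <= k)%N].

(* If all degrees of freedom of v in V_T vanish, then v = 0. Each restriction
   of v used below is a univariate polynomial of degree at most d that vanishes
   at the d - 1 nodes of a uniform grid on a segment and whose derivative
   vanishes at both ends: d + 1 Hermite conditions, so it is zero. This applies
   in turn to dy v on the horizontal edges and to dx v on the vertical edges
   (degree k - 1 there by the definition of V_T; the corner values of dxdy v
   give the end derivatives), then to v on the k - 1 vertical grid lines
   x = a + ih/(k-2) (dy v vanishes at their ends), and finally to every
   y-coefficient of v (dx v vanishes on the vertical edges).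
   Existence follows by counting dimensions: the map sending the (k+1)^2
   coefficients of v in Q_k to its (k-1)^2 + 4(k-2) + 4 degrees of freedom and
   to the four degree-k coefficients of the normal derivatives on the edges,
   which cut out V_T, is linear, injective, and between spaces of equal
   dimension. *)

From HB Require Import structures.
From mathcomp Require Import all_boot all_order all_algebra.
From mathcomp Require Import reals.
From mathcomp Require Import zify.
Import Order.TTheory GRing.Theory Num.Theory.
Local Open Scope ring_scope.
Set Implicit Arguments. Unset Strict Implicit.

Section HermiteRoots.
Variable R : fieldType.
Implicit Types (p : {poly R}) (x y : R).

Lemma dvdp_sqr_XsubC p x : root p x -> root p^`() x -> ('X - x%:P) ^+ 2 %| p.
Proof.
move=> /factor_theorem [q ->]; rewrite derivM derivXsubC mulr1 rootE !hornerE.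
rewrite subrr mulr0 add0r => qx.
have /factor_theorem [r ->] : root q x by [].
by rewrite -mulrA -expr2 dvdp_mull.
Qed.

Lemma poly_eq0_double_roots p x y (s : seq R) :
  uniq [:: x, y & s] -> (size p <= size s + 4)%N ->
  root p x -> root p^`() x -> root p y -> root p^`() y -> all (root p) s -> p = 0.
Proof.
rewrite /= inE negb_or => /and3P[/andP[xy xNs] yNs s_uniq] p_size.
move=> px p'x py p'y /allP ps.
have coprime_xy : coprimep (('X - x%:P) ^+ 2) (('X - y%:P) ^+ 2).
  by rewrite coprimep_expl // coprimep_expr // coprimep_XsubC root_XsubC eq_sym.
have /dvdpP [q pE] : ('X - x%:P) ^+ 2 * ('X - y%:P) ^+ 2 %| p.
  by rewrite Gauss_dvdp // !dvdp_sqr_XsubC.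
apply: contraTeq p_size => p_neq0; rewrite -ltnNge.
have q_neq0 : q != 0 by apply: contraNneq p_neq0 => q0; rewrite pE q0 mul0r.
have qs : all (root q) s.
  apply/allP => z zs; have zx : z != x by apply: contraNneq xNs => <-.
  have zy : z != y by apply: contraNneq yNs => <-.
  by move: (ps z zs); rewrite pE !rootM !root_XsubC (negbTE zx) (negbTE zy) !orbF.
have size_d : size (('X - x%:P) ^+ 2 * ('X - y%:P) ^+ 2) = 5%N.
  by rewrite size_mul ?expf_neq0 ?polyXsubC_eq0 // !size_exp_XsubC.
rewrite pE size_mul // -?size_poly_eq0 size_d // (addnS (size q)) /= ltn_add2r.
exact: max_poly_roots q_neq0 qs s_uniq.
Qed.

End HermiteRoots.

Section UniformGrid.
Variable R : numFieldType.

Lemma grid_hermite_eq0 (q : {poly R}) (x0 h : R) (n : nat) :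
  0 < h -> (0 < n)%N -> (size q <= n.+3)%N ->
  (forall i, (i <= n)%N -> root q (x0 + h / n%:R * i%:R)) ->
  root q^`() x0 -> root q^`() (x0 + h) -> q = 0.
Proof.
move=> h_gt0 n_gt0 q_size q_nodes q'x0 q'x1.
pose node i := x0 + h / n%:R * i%:R.
have node_inj : injective node.
  have step_neq0 : h / n%:R != 0 by rewrite mulf_neq0 ?invr_eq0 ?pnatr_eq0 -?lt0n ?gt_eqF.
  by move=> i j /addrI /(mulfI step_neq0) /eqP; rewrite eqr_nat => /eqP.
have node0 : node 0%N = x0 by rewrite /node mulr0 addr0.
have node_last : node n = x0 + h by rewrite /node divfK // pnatr_eq0 -lt0n.
apply: (@poly_eq0_double_roots _ _ x0 (x0 + h) [seq node i | i <- iota 1 (n - 1)]) => //.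
- rewrite -node_last -node0 -map_cons -map_cons map_inj_uniq //= iota_uniq !inE.
  by rewrite !mem_iota andbT; apply/andP; split; lia.
- by rewrite size_map size_iota; apply: leq_trans q_size _; move: n_gt0; clear; lia.
- by rewrite -{1}node0 q_nodes.
- by rewrite -node_last q_nodes.
- apply/allP => z /mapP [i]; rewrite mem_iota => /andP [_ i_lt] ->.
  by apply: q_nodes; lia.
Qed.

End UniformGrid.

Lemma size_deriv_le (R : nzRingType) (p : {poly R}) : (size p^`() <= size p)%N.
Proof. exact: leq_trans (size_poly _ _) (leq_pred _). Qed.

Section Bivariate.
Variable R : comNzRingType.
Implicit Types (p q : poly2 R) (c s x y : R).

Lemma coef_dx p j : (dx p)`_j = (p`_j)^`().
Proof. by rewrite /dx coef_map_id0 // deriv0. Qed.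

Lemma coef_dy p j : (dy p)`_j = p`_j.+1 *+ j.+1.
Proof. exact: coef_deriv. Qed.

Lemma coef_restr_v p c j : (restr_v p c)`_j = (p`_j).[c].
Proof. by rewrite /restr_v coef_map_id0 // horner0. Qed.

Lemma size_dx p : (size (dx p) <= size p)%N.
Proof. exact: size_poly. Qed.

Lemma restr_hE p c n : (size p <= n)%N -> restr_h p c = \sum_(j < n) c ^+ j *: p`_j.
Proof.
move=> p_size; rewrite /restr_h (horner_coef_wide _ p_size).
by apply: eq_bigr => j _; rewrite -rmorphXn mulrC mul_polyC.
Qed.

Lemma restr_h_dx p c : restr_h (dx p) c = (restr_h p c)^`().
Proof.
rewrite (restr_hE c (size_dx p)) (restr_hE c (leqnn _)) raddf_sum.
by apply: eq_bigr => j _; rewrite /= coef_dx derivZ.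
Qed.

Lemma restr_v_dy p c : restr_v (dy p) c = (restr_v p c)^`().
Proof. by apply/polyP => j; rewrite coef_restr_v coef_dy !coef_deriv coef_restr_v hornerMn. Qed.

Lemma dx_dy p : dx (dy p) = dy (dx p).
Proof. by apply/polyP => j; rewrite coef_dx !coef_dy coef_dx derivMn. Qed.

Lemma eval2_restr_h p x y : eval2 p x y = (restr_h p y).[x].
Proof. by []. Qed.

Lemma eval2_restr_v p x y : eval2 p x y = (restr_v p x).[y].
Proof.
rewrite eval2_restr_h (restr_hE y (leqnn _)) (horner_coef_wide _ (size_poly _ _)).
by rewrite horner_sum; apply: eq_bigr => j _; rewrite hornerZ coef_restr_v mulrC.
Qed.

Lemma inQ_dx n p : inQ n p -> inQ n (dx p).
Proof.
case=> p_size coef_size; split => [|j]; first exact: leq_trans (size_dx p) p_size.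
by rewrite coef_dx; apply: leq_trans (size_deriv_le _) (coef_size j).
Qed.

Lemma inQ_dy n p : inQ n p -> inQ n (dy p).
Proof.
case=> p_size coef_size; split => [|j]; first exact: leq_trans (size_deriv_le p) p_size.
apply/leq_sizeP => i i_ge; rewrite coef_dy coefMn.
by rewrite nth_default ?mul0rn // (leq_trans (coef_size _) i_ge).
Qed.

Lemma size_restr_h n p c : inQ n p -> (size (restr_h p c) <= n.+1)%N.
Proof.
case=> p_size coef_size; apply/leq_sizeP => m m_ge.
rewrite (restr_hE c p_size) coef_sum big1 // => j _.
by rewrite coefZ nth_default ?mulr0 // (leq_trans (coef_size j)).
Qed.

Lemma size_restr_v n p c : inQ n p -> (size (restr_v p c) <= n.+1)%N.
Proof. by case=> p_size _; apply: leq_trans (size_poly _ _) p_size. Qed.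

Lemma dx_lin s p q : dx (s%:P%:P * p + q) = s%:P%:P * dx p + dx q.
Proof.
apply/polyP => j; rewrite coef_dx !coefD !coefCM !coef_dx.
by rewrite derivD derivM derivC mul0r add0r.
Qed.

Lemma dy_lin s p q : dy (s%:P%:P * p + q) = s%:P%:P * dy p + dy q.
Proof. by rewrite /dy derivD derivM derivC mul0r add0r. Qed.

Lemma eval2_lin s p q x y : eval2 (s%:P%:P * p + q) x y = s * eval2 p x y + eval2 q x y.
Proof. by rewrite /eval2 !hornerE. Qed.

Lemma coef_restr_h_lin s p q c n :
  (restr_h (s%:P%:P * p + q) c)`_n = s * (restr_h p c)`_n + (restr_h q c)`_n.
Proof. by rewrite /restr_h !hornerE coefD coefCM. Qed.

Lemma coef_restr_v_lin s p q c n :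
  (restr_v (s%:P%:P * p + q) c)`_n = s * (restr_v p c)`_n + (restr_v q c)`_n.
Proof. by rewrite !coef_restr_v coefD coefCM !hornerE. Qed.

End Bivariate.

Section DegreesOfFreedom.
Variables (R : numFieldType) (k : nat) (a b h : R).

Definition dof_space :=
  ('M[R]_(k - 1) * 'M[R]_(2, k - 2) * 'M[R]_(k - 2, 2) * 'M[R]_2)%type.

Definition dofs (v : poly2 R) : dof_space :=
  (\matrix_(i, j) eval2 v (a + h / (k - 2)%:R * i%:R) (b + h / (k - 2)%:R * j%:R),
   \matrix_(i, j) eval2 (dx v) (a + h * i%:R) (b + h * (j%:R / (k - 3)%:R)),
   \matrix_(i, j) eval2 (dy v) (a + h * (i%:R / (k - 3)%:R)) (b + h * j%:R),
   \matrix_(i, j) eval2 (dx (dy v)) (a + h * i%:R) (b + h * j%:R)).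

Lemma dofsP v f1 f2 f3 f4 :
  dofs v = (\matrix_(i, j) f1 i j, \matrix_(i, j) f2 i j,
            \matrix_(i, j) f3 i j, \matrix_(i, j) f4 i j) <->
  [/\ forall i j : 'I_(k - 1),
        eval2 v (a + h / (k - 2)%:R * i%:R) (b + h / (k - 2)%:R * j%:R) = f1 i j,
      forall (i : 'I_2) (j : 'I_(k - 2)),
        eval2 (dx v) (a + h * i%:R) (b + h * (j%:R / (k - 3)%:R)) = f2 i j,
      forall (i : 'I_(k - 2)) (j : 'I_2),
        eval2 (dy v) (a + h * (i%:R / (k - 3)%:R)) (b + h * j%:R) = f3 i j &
      forall i j : 'I_2, eval2 (dx (dy v)) (a + h * i%:R) (b + h * j%:R) = f4 i j].
Proof.
split=> [[/matrixP e1 /matrixP e2 /matrixP e3 /matrixP e4] | [e1 e2 e3 e4]].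
  by split=> i j; [move: (e1 i j) | move: (e2 i j) | move: (e3 i j) | move: (e4 i j)];
    rewrite !mxE.
by congr (_, _, _, _); apply/matrixP => i j; rewrite !mxE.
Qed.

Lemma dof_space0 : (0 : dof_space) =
  (\matrix_(i, j) 0, \matrix_(i, j) 0, \matrix_(i, j) 0, \matrix_(i, j) 0).
Proof. by congr (_, _, _, _); apply/matrixP => i j; rewrite !mxE. Qed.

End DegreesOfFreedom.

(* Here k = m + 4: the grid of (i) has m + 2 intervals, those of (ii) and (iii) m + 1. *)
Section Unisolvence.
Variables (R : numFieldType) (m : nat) (a b h : R) (p : poly2 R).
Hypotheses (h_gt0 : 0 < h) (pV : inVT m.+4 a b h p) (p_dofs : dofs m.+4 a b h p = 0).

Let p_dof_eqs := (@dofsP R m.+4 a b h p (fun _ _ => 0) (fun _ _ => 0)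
                    (fun _ _ => 0) (fun _ _ => 0)).1 (etrans p_dofs (dof_space0 _ _)).

Lemma value_nodes i j : (i <= m.+2)%N -> (j <= m.+2)%N ->
  eval2 p (a + h / m.+2%:R * i%:R) (b + h / m.+2%:R * j%:R) = 0.
Proof.
move=> i_le j_le; case: p_dof_eqs => /(_ (Ordinal (i_le : (i < m.+3)%N))).
by move/(_ (Ordinal (j_le : (j < m.+3)%N))).
Qed.

Lemma dx_nodes x j : x = a \/ x = a + h -> (j <= m.+1)%N ->
  eval2 (dx p) x (b + h / m.+1%:R * j%:R) = 0.
Proof.
move=> x_edge j_le; case: p_dof_eqs => _ /(_ _ (Ordinal (j_le : (j < m.+2)%N))) + _ _.
rewrite mulrA mulrAC; case: x_edge => -> => [/(_ ord0) | /(_ ord_max)] /=.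
  by rewrite mulr0 addr0.
by rewrite mulr1.
Qed.

Lemma dy_nodes y i : y = b \/ y = b + h -> (i <= m.+1)%N ->
  eval2 (dy p) (a + h / m.+1%:R * i%:R) y = 0.
Proof.
move=> y_edge i_le; case: p_dof_eqs => _ _ /(_ (Ordinal (i_le : (i < m.+2)%N))) + _.
rewrite mulrA mulrAC; case: y_edge => -> => [/(_ ord0) | /(_ ord_max)] /=.
  by rewrite mulr0 addr0.
by rewrite mulr1.
Qed.

Lemma dxdy_corners x y : x = a \/ x = a + h -> y = b \/ y = b + h ->
  eval2 (dx (dy p)) x y = 0.
Proof.
case: p_dof_eqs => _ _ _ corners.
case=> -> [] -> ; [move: (corners ord0 ord0) | move: (corners ord0 ord_max)
                  | move: (corners ord_max ord0) | move: (corners ord_max ord_max)];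
  by rewrite /= ?mulr0 ?mulr1 ?addr0.
Qed.

Lemma dy_horizontal_edges y : y = b \/ y = b + h -> restr_h (dy p) y = 0.
Proof.
move=> y_edge; apply: (@grid_hermite_eq0 _ _ a h m.+1) => //.
- by case: pV y_edge => _ hb hbh _ _ [] ->.
- by move=> i i_le; rewrite rootE -eval2_restr_h dy_nodes.
- by rewrite -restr_h_dx rootE -eval2_restr_h dxdy_corners //; left.
- by rewrite -restr_h_dx rootE -eval2_restr_h dxdy_corners //; right.
Qed.

Lemma dx_vertical_edges x : x = a \/ x = a + h -> restr_v (dx p) x = 0.
Proof.
move=> x_edge; apply: (@grid_hermite_eq0 _ _ b h m.+1) => //.
- by case: pV x_edge => _ _ _ ha hah [] ->.
- by move=> j j_le; rewrite rootE -eval2_restr_v dx_nodes.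
- by rewrite -restr_v_dy rootE -eval2_restr_v -dx_dy dxdy_corners //; left.
- by rewrite -restr_v_dy rootE -eval2_restr_v -dx_dy dxdy_corners //; right.
Qed.

Lemma vertical_lines i : (i <= m.+2)%N -> restr_v p (a + h / m.+2%:R * i%:R) = 0.
Proof.
move=> i_le; apply: (@grid_hermite_eq0 _ _ b h m.+2) => //.
- by case: pV => pQ _ _ _ _; apply: size_restr_v.
- by move=> j j_le; rewrite rootE -eval2_restr_v value_nodes.
- rewrite -restr_v_dy rootE -eval2_restr_v eval2_restr_h.
  by rewrite dy_horizontal_edges ?horner0 //; left.
- rewrite -restr_v_dy rootE -eval2_restr_v eval2_restr_h.
  by rewrite dy_horizontal_edges ?horner0 //; right.
Qed.

Lemma unisolvence : p = 0.
Proof.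
apply/polyP => j; rewrite coef0; apply: (@grid_hermite_eq0 _ _ a h m.+2) => //.
- by case: pV => -[_ ->].
- by move=> i i_le; rewrite rootE -coef_restr_v vertical_lines ?coef0.
- by rewrite -coef_dx rootE -coef_restr_v dx_vertical_edges ?coef0 //; left.
- by rewrite -coef_dx rootE -coef_restr_v dx_vertical_edges ?coef0 //; right.
Qed.

End Unisolvence.

Lemma VT_unisolvent (R : numFieldType) k (a b h : R) (p : poly2 R) :
  (4 <= k)%N -> 0 < h -> inVT k a b h p -> dofs k a b h p = 0 -> p = 0.
Proof. by case: k => [|[|[|[|m]]]] // _; apply: unisolvence. Qed.

Lemma size_leq_coef (R : nzRingType) (q : {poly R}) n :
  (size q <= n.+1)%N -> (size q <= n)%N = (q`_n == 0).
Proof.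
move=> q_size; apply/idP/eqP => [|qn]; first by move=> ?; rewrite nth_default.
apply/leq_sizeP => j; rewrite leq_eqVlt => /orP [/eqP <- // |].
exact: (leq_sizeP _ _ q_size).
Qed.

Lemma linear_inj_surj (K : fieldType) (U V : vectType K) (f : {linear U -> V}) :
  dim U = dim V -> injective f -> forall w, exists u, f u = w.
Proof.
move=> dimUV f_inj w.
have g_ker0 : lker (linfun f) == 0%VS by apply/lker0P => u v; rewrite !lfunE => /f_inj.
have g_full : limg (linfun f) = fullv.
  by apply/eqP; rewrite eqEdim subvf limg_dim_eq ?(eqP g_ker0) ?capv0 //= !dimvf dimUV.
have /memv_imgP [u _ ->] : w \in limg (linfun f) by rewrite g_full memvf.
by exists u; rewrite lfunE.
Qed.

Section CoefficientMatrices.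
Variables (R : numFieldType) (k : nat) (a b h : R).

Definition poly2_of_mx (c : 'M[R]_k.+1) : poly2 R :=
  \poly_(j < k.+1) \poly_(i < k.+1) c (inord i) (inord j).

Definition mx_of_poly2 (v : poly2 R) : 'M[R]_k.+1 := \matrix_(i, j) (v`_j)`_i.

Lemma inQ_poly2_of_mx c : inQ k (poly2_of_mx c).
Proof.
split=> [|j]; first exact: size_poly.
by rewrite coef_poly; case: ifP => _; [exact: size_poly | rewrite size_poly0].
Qed.

Lemma poly2_of_mxK : cancel poly2_of_mx mx_of_poly2.
Proof.
by move=> c; apply/matrixP => i j; rewrite mxE coef_poly ltn_ord coef_poly ltn_ord !inord_val.
Qed.

Lemma mx_of_poly2K v : inQ k v -> poly2_of_mx (mx_of_poly2 v) = v.
Proof.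
case=> v_size coef_size; apply/polyP => j; rewrite coef_poly; case: ltnP => j_lt.
  apply/polyP => i; rewrite coef_poly; case: ltnP => i_lt; first by rewrite mxE !inordK.
  by rewrite nth_default // (leq_trans (coef_size j)).
by rewrite nth_default // (leq_trans v_size).
Qed.

Lemma poly2_of_mx_lin s c d :
  poly2_of_mx (s *: c + d) = s%:P%:P * poly2_of_mx c + poly2_of_mx d.
Proof.
apply/polyP => j; rewrite coefD coefCM !coef_poly.
case: ltnP => _; last by rewrite mulr0 addr0.
apply/polyP => i; rewrite coefD coefCM !coef_poly.
case: ltnP => _; last by rewrite mulr0 addr0.
by rewrite !mxE.
Qed.

Definition edge_excess (v : poly2 R) : 'rV[R]_4 :=
  \row_l [:: (restr_h (dy v) b)`_k; (restr_h (dy v) (b + h))`_k;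
             (restr_v (dx v) a)`_k; (restr_v (dx v) (a + h))`_k]`_l.

Lemma inVT_edge_excess v : inQ k v -> inVT k a b h v <-> edge_excess v = 0.
Proof.
move=> vQ; have [dyQ dxQ] := (inQ_dy vQ, inQ_dx vQ).
rewrite /inVT !(size_leq_coef (size_restr_h _ dyQ)) !(size_leq_coef (size_restr_v _ dxQ)).
split=> [[_ /eqP e1 /eqP e2 /eqP e3 /eqP e4] | /rowP e].
  by apply/rowP => -[[|[|[|[|l]]]] //= l_lt]; rewrite !mxE.
split=> //; apply/eqP; [move: (e 0) | move: (e 1) | move: (e 2) | move: (e 3)];
  by rewrite !mxE.
Qed.

Definition dofs_mx (c : 'M[R]_k.+1) : dof_space R k * 'rV[R]_4 :=
  (dofs k a b h (poly2_of_mx c), edge_excess (poly2_of_mx c)).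

Fact dofs_mx_is_linear : linear dofs_mx.
Proof.
move=> s c d; rewrite /dofs_mx poly2_of_mx_lin.
congr (_, _, _, _, _); apply/matrixP => i j; rewrite !mxE ?dy_lin ?dx_lin ?eval2_lin //.
case: j => -[|[|[|[|j]]]] //= _;
  by rewrite ?dy_lin ?dx_lin ?coef_restr_h_lin ?coef_restr_v_lin.
Qed.

HB.instance Definition _ := GRing.isLinear.Build R _ _ _ dofs_mx dofs_mx_is_linear.

Lemma dofs_mx_inj : (4 <= k)%N -> 0 < h -> injective dofs_mx.
Proof.
move=> k_ge4 h_gt0; apply: raddf_inj => c c_ker.
have [dofs0 excess0] := (congr1 fst c_ker, congr1 snd c_ker).
have cV : inVT k a b h (poly2_of_mx c).
  by apply/inVT_edge_excess; [exact: inQ_poly2_of_mx | exact: excess0].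
have c0 := VT_unisolvent k_ge4 h_gt0 cV dofs0.
by rewrite -[c]poly2_of_mxK c0; apply/matrixP => i j; rewrite !mxE !coef0.
Qed.

Lemma dim_dofs_mx : (4 <= k)%N -> dim 'M[R]_k.+1 = dim (dof_space R k * 'rV[R]_4)%type.
Proof.
move=> k_ge4; rewrite dim_matrix.
by rewrite -[RHS]/((k - 1) * (k - 1) + 2 * (k - 2) + (k - 2) * 2 + 2 * 2 + 1 * 4)%N; nia.
Qed.

Lemma dofs_mx_surj : (4 <= k)%N -> 0 < h -> forall w, exists c, dofs_mx c = w.
Proof.
by move=> k_ge4 h_gt0; apply: linear_inj_surj (dim_dofs_mx k_ge4) (dofs_mx_inj k_ge4 h_gt0).
Qed.

End CoefficientMatrices.

Theorem lemma2p1 (R : realType) (k : nat) (a b h : R)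
  (hk : (4 <= k)%N) (hh : 0 < h)
  (f1 : 'I_(k - 1) -> 'I_(k - 1) -> R)
  (f2 : 'I_2 -> 'I_(k - 2) -> R)
  (f3 : 'I_(k - 2) -> 'I_2 -> R)
  (f4 : 'I_2 -> 'I_2 -> R) :
  exists! v : poly2 R,
    [/\ inVT k a b h v,
        (forall (i j : 'I_(k - 1)),
           eval2 v (a + h / (k - 2)%:R * i%:R) (b + h / (k - 2)%:R * j%:R)
           = f1 i j),
        (forall (i : 'I_2) (j : 'I_(k - 2)),
           eval2 (dx v) (a + h * i%:R) (b + h * (j%:R / (k - 3)%:R))
           = f2 i j),
        (forall (i : 'I_(k - 2)) (j : 'I_2),
           eval2 (dy v) (a + h * (i%:R / (k - 3)%:R)) (b + h * j%:R)
           = f3 i j) &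
        (forall (i j : 'I_2),
           eval2 (dx (dy v)) (a + h * i%:R) (b + h * j%:R) = f4 i j)].
Proof.
pose F := (\matrix_(i, j) f1 i j, \matrix_(i, j) f2 i j,
           \matrix_(i, j) f3 i j, \matrix_(i, j) f4 i j).
have [c dofs_mx_c] := dofs_mx_surj a b hk hh (F, 0).
have [/dofsP[e1 e2 e3 e4] /(inVT_edge_excess a b h (inQ_poly2_of_mx c)) cV] :=
  (congr1 fst dofs_mx_c, congr1 snd dofs_mx_c).
exists (poly2_of_mx c); split=> // v [vV v1 v2 v3 v4].
have vQ : inQ k v by case: vV.
rewrite -(mx_of_poly2K vQ); congr poly2_of_mx.
apply: (dofs_mx_inj (a := a) (b := b) hk hh).
rewrite dofs_mx_c /dofs_mx (mx_of_poly2K vQ); congr (_, _).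
- exact/esym/dofsP.
- exact/esym/(inVT_edge_excess a b h vQ).
Qed.
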